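(* Let $v_1\ge v_2\ge v_3\ge v_4>0$ and $p_{ij}=\frac{v_i}{v_i+v_j}$. Let $T_A,T_B,T_C$ be the probabilities that team $a_1$ wins the four-team knockout tournament of type $A$, $B$, $C$ respectively (defined in the context). Then $T_A\ge T_B\ge T_C$.
   Context: Four teams $a_1,\dots,a_4$ with weights $v_1,\dots,v_4$. In any game between $a_i$ and $a_j$, $a_i$ wins with probability $p_{ij}=v_i/(v_i+v_j)$, independently of other games. A knockout tournament consists of two first-round games whose winners meet in a final. Tournament $A$: first round $a_1$ vs $a_4$ and $a_2$ vs $a_3$. Tournament $B$: first round $a_1$ vs $a_3$ and $a_2$ vs $a_4$. Tournament $C$: first round $a_1$ vs $a_2$ and $a_3$ vs $a_4$. *)

From Stdlib Require Import Reals.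
Open Scope R_scope.

Definition p (vi vj : R) : R := vi / (vi + vj).

(* Probability that a_1 (weight v1) wins a four-team knockout tournament whose
   first round is a_1 vs x and y vs z (weights vx, vy, vz): a_1 must beat x,
   then beat the winner of y vs z.  Games are independent. *)
Definition win_prob (v1 vx vy vz : R) : R :=
  p v1 vx * (p vy vz * p v1 vy + p vz vy * p v1 vz).

Definition T_A (v1 v2 v3 v4 : R) : R := win_prob v1 v4 v2 v3.
Definition T_B (v1 v2 v3 v4 : R) : R := win_prob v1 v3 v2 v4.
Definition T_C (v1 v2 v3 v4 : R) : R := win_prob v1 v2 v3 v4.

(* Expanding the two routes to the final, the probability that a team of weight
   a wins when it first meets x while y plays z is
     a^2 / ((a+x)(a+y)(a+z)) * (a + H(y,z)),
   with H the harmonic mean.  The first factor does not depend on the draw, so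
   a_1 does best when the two teams of the other half have the largest harmonic
   mean: {a2,a3} for A, {a2,a4} for B and {a3,a4} for C.  Monotonicity of the
   harmonic mean in each argument then gives T_A >= T_B >= T_C. *)

From Stdlib Require Import Reals Lra.
Open Scope R_scope.

Definition harmonic_mean (x y : R) : R := 2 * x * y / (x + y).

Lemma harmonic_meanC (x y : R) : harmonic_mean x y = harmonic_mean y x.
Proof. unfold harmonic_mean. rewrite (Rplus_comm x y). f_equal. ring. Qed.

Lemma harmonic_mean_shift (x y : R) :
  0 < x -> 0 < y -> harmonic_mean x y = 2 * x - 2 * x ^ 2 / (x + y).
Proof. intros Hx Hy. unfold harmonic_mean. field. lra. Qed.

Lemma harmonic_mean_le_compat_l (x y y' : R) :
  0 < x -> 0 < y -> y <= y' -> harmonic_mean x y <= harmonic_mean x y'.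
Proof.
  intros Hx Hy Hyy'.
  rewrite !harmonic_mean_shift by lra.
  assert (Hinv : / (x + y') <= / (x + y)) by (apply Rinv_le_contravar; lra).
  assert (Hsq : 0 <= 2 * x ^ 2) by nra.
  unfold Rdiv. apply Rplus_le_compat_l, Ropp_le_contravar.
  now apply Rmult_le_compat_l.
Qed.

Lemma harmonic_mean_le_compat (x x' y y' : R) :
  0 < x -> x <= x' -> 0 < y -> y <= y' ->
  harmonic_mean x y <= harmonic_mean x' y'.
Proof.
  intros Hx Hxx' Hy Hyy'.
  apply Rle_trans with (harmonic_mean x y').
  - now apply harmonic_mean_le_compat_l.
  - rewrite (harmonic_meanC x y'), (harmonic_meanC x' y').
    apply harmonic_mean_le_compat_l; lra.
Qed.

Lemma win_prob_harmonic_mean (a x y z : R) :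
  0 < a -> 0 < x -> 0 < y -> 0 < z ->
  win_prob a x y z
  = a ^ 2 / ((a + x) * (a + y) * (a + z)) * (a + harmonic_mean y z).
Proof.
  intros Ha Hx Hy Hz. unfold win_prob, p, harmonic_mean.
  field. repeat split; lra.
Qed.

Lemma win_prob_le_compat (a x y z x' y' z' : R) :
  0 < a -> 0 < x -> 0 < y -> 0 < z -> 0 < x' -> 0 < y' -> 0 < z' ->
  (a + x) * (a + y) * (a + z) = (a + x') * (a + y') * (a + z') ->
  harmonic_mean y z <= harmonic_mean y' z' ->
  win_prob a x y z <= win_prob a x' y' z'.
Proof.
  intros Ha Hx Hy Hz Hx' Hy' Hz' Hprod Hmean.
  rewrite !win_prob_harmonic_mean, <- Hprod by assumption.
  apply Rmult_le_compat_l.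
  - apply Rle_mult_inv_pos; [nra |].
    repeat apply Rmult_lt_0_compat; lra.
  - lra.
Qed.

Theorem theorem2 (v1 v2 v3 v4 : R) :
  v1 >= v2 -> v2 >= v3 -> v3 >= v4 -> v4 > 0 ->
  T_A v1 v2 v3 v4 >= T_B v1 v2 v3 v4 /\ T_B v1 v2 v3 v4 >= T_C v1 v2 v3 v4.
Proof.
  intros H12 H23 H34 H4. unfold T_A, T_B, T_C.
  split; apply Rle_ge, win_prob_le_compat; try lra; try ring;
    apply harmonic_mean_le_compat; lra.
Qed.
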